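(* Let $V,\mathfrak{a}$ be finite-dimensional vector spaces over $\mathbb{Q}$, and let $\varphi^1_i,\varphi^2_j\in\mathfrak{a}^*$, $\chi^1_i,\chi^2_j\in V^*$ for $i=1,\dots,k_1$, $j=1,\dots,k_2$. For $v\in V(\mathbb{R})=V\otimes\mathbb{R}$ and $l=1,2$ set $P^l(v)=\{\lambda\in\mathfrak{a}(\mathbb{R}):\langle\varphi^l_i,\lambda\rangle\ge-\chi^l_i(v)\ \text{for all } i=1,\dots,k_l\}$. Suppose there is $v\in V(\mathbb{R})$ such that $P^1(v)=P^2(v)$ and this polytope has dimension $\dim\mathfrak{a}(\mathbb{R})$. Then for every neighborhood $O$ of $v$ in $V(\mathbb{R})$ there is $v'\in O\cap V$ with $P^1(v')=P^2(v')$.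
   Context: $\mathfrak{a}(\mathbb{R})=\mathfrak{a}\otimes_{\mathbb{Q}}\mathbb{R}$; elements of $\mathfrak{a}^*$ and $V^*$ are extended $\mathbb{R}$-linearly. $V$ is regarded as the set of rational points of $V(\mathbb{R})$. *)

From HB Require Import structures.
From mathcomp Require Import all_boot all_order all_algebra.
From mathcomp Require Import all_classical all_reals all_analysis.
Set Implicit Arguments. Unset Strict Implicit. Unset Printing Implicit Defensive.
Import Order.TTheory GRing.Theory Num.Theory.
Import numFieldNormedType.Exports.
Local Open Scope ring_scope.
Local Open Scope classical_set_scope.

(* V = Q^n, a = Q^m (coordinates fixed); V(R) = 'rV[R]_n, a(R) = 'rV[R]_m.
   A rational linear functional f in (Q^m)^* is a row vector 'rV[rat]_m,
   extended R-linearly: <f, x> = \sum_i f_i x_i. *)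
Definition evalQ (R : realType) (m : nat) (f : 'rV[rat]_m) (x : 'rV[R]_m) : R :=
  \sum_(i < m) ratr (f 0 i) * x 0 i.

Definition polyhedronP (R : realType) (n m k : nat)
  (phi : 'I_k -> 'rV[rat]_m) (chi : 'I_k -> 'rV[rat]_n) (v : 'rV[R]_n)
  : set 'rV[R]_m :=
  [set lam | forall i : 'I_k, - evalQ (chi i) v <= evalQ (phi i) lam].

(* S has (affine) dimension m = dim a(R): S contains a point p0 and points
   p0 + D_i (i < m) whose differences D_i are linearly independent,
   i.e. the affine hull of S is all of R^m. *)
Definition full_dim (R : realType) (m : nat) (S : set 'rV[R]_m) : Prop :=
  exists (p0 : 'rV[R]_m) (D : 'M[R]_m),
    S p0 /\ (forall i : 'I_m, S (p0 + row i D)) /\ \rank D = m.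

From HB Require Import structures.
From mathcomp Require Import all_boot all_order all_algebra.
From mathcomp Require Import all_classical all_reals all_analysis.
From mathcomp Require Import ring lra.
Import Order.TTheory GRing.Theory Num.Theory.
Import numFieldNormedType.Exports.
Local Open Scope ring_scope.
Local Open Scope classical_set_scope.

(* Eliminating lambda by Fourier-Motzkin, the inclusion P^A(v) <= P^B(v) holds
   iff v satisfies none of finitely many systems of strict and weak linear
   inequalities with rational coefficients.  Whether P^1(v) = P^2(v) therefore
   only depends on the signs at v of finitely many rational linear forms.
   Rational points with the same sign pattern exist arbitrarily close to v: the
   forms vanishing at v cut out a subspace defined over Q, in which rational
   points are dense, and the other forms keep their sign near v. *)

Section LinearForms.
Context {R : realType}.

Lemma evalQD {n} (a b : 'rV[rat]_n) (x : 'rV[R]_n) :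
  evalQ (a + b) x = evalQ a x + evalQ b x.
Proof.
by rewrite /evalQ -big_split; apply: eq_bigr => i _; rewrite mxE rmorphD mulrDl.
Qed.

Lemma evalQZ {n} (s : rat) (a : 'rV[rat]_n) (x : 'rV[R]_n) :
  evalQ (s *: a) x = ratr s * evalQ a x.
Proof.
by rewrite /evalQ mulr_sumr; apply: eq_bigr => i _; rewrite mxE rmorphM mulrA.
Qed.

Lemma evalQN {n} (a : 'rV[rat]_n) (x : 'rV[R]_n) : evalQ (- a) x = - evalQ a x.
Proof. by rewrite -scaleN1r evalQZ rmorphN1 mulN1r. Qed.

Lemma evalQ_split {m n} (a : 'rV[rat]_(m + n)) (x : 'rV[R]_(m + n)) :
  evalQ a x = evalQ (lsubmx a) (lsubmx x) + evalQ (rsubmx a) (rsubmx x).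
Proof.
by rewrite /evalQ big_split_ord; congr (_ + _); apply: eq_bigr => i _; rewrite !mxE.
Qed.

Lemma evalQ_row_mx {m n} (a : 'rV[rat]_m) (b : 'rV[rat]_n)
    (x : 'rV[R]_m) (y : 'rV[R]_n) :
  evalQ (row_mx a b) (row_mx x y) = evalQ a x + evalQ b y.
Proof. by rewrite evalQ_split !row_mxKl !row_mxKr. Qed.

Lemma evalQ1 (a : 'rV[rat]_1) (x : 'rV[R]_1) : evalQ a x = ratr (a 0 0) * x 0 0.
Proof. by rewrite /evalQ big_ord1. Qed.

Lemma evalQ_col {n p} (M : 'M[rat]_(n, p)) (x : 'rV[R]_n) j :
  (x *m map_mx ratr M) 0 j = evalQ (col j M)^T x.
Proof. by rewrite mxE; apply: eq_bigr => i _; rewrite !mxE mulrC. Qed.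

End LinearForms.

Section Bounds.
Context {R : realType}.

Lemma seq_argmax {T : eqType} (f : T -> R) (s : seq T) : s != [::] ->
  exists2 x, x \in s & {in s, forall y, f y <= f x}.
Proof.
elim: s => [//|x s IH] _; have [->|/IH[x' x's maxx']] := eqVneq s [::].
  by exists x => [|y]; rewrite ?inE // => /eqP ->.
have [le|lt] := leP (f x) (f x').
  by exists x' => [|y]; rewrite inE ?x's ?orbT // => /predU1P[->|/maxx'].
exists x => [|y]; rewrite inE ?eqxx // => /predU1P[->//|/maxx' le].
exact: le_trans (ltW lt).
Qed.

Lemma exists_between (s t : seq (bool * R)) :
  {in s & t, forall p q, p.2 < q.2 ?<= if p.1 && q.1} ->
  exists y, {in s, forall p, p.2 < y ?<= if p.1} /\
            {in t, forall q, y < q.2 ?<= if q.1}.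
Proof.
move=> st; have [->|/(seq_argmax snd)[p0 p0s maxp]] := eqVneq s [::].
  have [->|/(seq_argmax (fun q => - q.2))[q0 _ minq]] := eqVneq t [::].
    by exists 0.
  by exists (q0.2 - 1); split=> // q /minq ?; apply: lteifS; lra.
have [->|/(seq_argmax (fun q => - q.2))[q0 q0t minq]] := eqVneq t [::].
  by exists (p0.2 + 1); split=> // p /maxp ?; apply: lteifS; lra.
have [lt|ge] := ltP p0.2 q0.2.
  by exists ((p0.2 + q0.2) / 2); split=> [p /maxp|q /minq] ?; apply: lteifS; lra.
(* Now q0.2 <= p0.2: the lower bounds are met at q0.2 thanks to their
   compatibility with q0, the upper bounds thanks to their compatibility with p0. *)
exists q0.2; split=> [p ps|q qt].
  by apply: lteif_imply (st _ _ ps q0t); apply/implyP => /andP[].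
apply: lteif_imply (lteif_trans (ge : q0.2 < p0.2 ?<= if true) (st _ _ p0s qt)).
by apply/implyP => /and3P[].
Qed.

Lemma lteif_affine_pos (a r y : R) C : 0 < a ->
  (0 < a * y + r ?<= if C) = (- r / a < y ?<= if C).
Proof. by move=> a0; rewrite lteif_pdivrMr // -[in RHS]subr_lteif0r opprK mulrC. Qed.

Lemma lteif_affine_neg (a r y : R) C : a < 0 ->
  (0 < a * y + r ?<= if C) = (y < - r / a ?<= if C).
Proof. by move=> a0; rewrite lteif_ndivlMr // -[in RHS]subr_lteif0r opprK mulrC. Qed.

End Bounds.

Lemma rsubmx0 {T : Type} {k n} (x : 'M[T]_(k, 0 + n)) : rsubmx x = x.
Proof. by apply/matrixP => i j; rewrite mxE; congr (x _ _); apply: val_inj. Qed.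

Lemma rsubmxS {T : Type} {k m n} (x : 'M[T]_(k, m.+1 + n)) :
  rsubmx (rsubmx (x : 'M[T]_(k, 1 + (m + n)))) = rsubmx x.
Proof. by apply/matrixP => i j; rewrite !mxE; congr (x _ _); apply: val_inj. Qed.

(* A constraint (weak, a) on x stands for 0 <= a.x if weak, and 0 < a.x otherwise. *)
Notation constraint n := (bool * 'rV[rat]_n)%type.

Definition coef0 {n} (c : constraint (1 + n)) : rat := lsubmx c.2 0 0.

Definition fm_step {n} (S : seq (constraint (1 + n))) : seq (constraint n) :=
  [seq (c.1, rsubmx c.2) | c <- S & coef0 c == 0] ++
  [seq (p.1 && q.1, (- coef0 q) *: rsubmx p.2 + coef0 p *: rsubmx q.2)
     | p <- [seq c <- S | 0 < coef0 c], q <- [seq c <- S | coef0 c < 0]].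

Fixpoint fm_elim m {n} : seq (constraint (m + n)) -> seq (constraint n) :=
  if m is m'.+1 then fun S => fm_elim m' (fm_step S) else id.

Section FourierMotzkin.
Context {R : realType}.

Definition sat {n} (c : constraint n) (x : 'rV[R]_n) : bool :=
  0 < evalQ c.2 x ?<= if c.1.

Definition sat_all {n} (S : seq (constraint n)) (x : 'rV[R]_n) : bool :=
  all (sat^~ x) S.

Lemma sat_all_sg {n} (S : seq (constraint n)) (x y : 'rV[R]_n) :
  {in S, forall c, Num.sg (evalQ c.2 x) = Num.sg (evalQ c.2 y)} ->
  sat_all S x = sat_all S y.
Proof.
move=> xy; apply: eq_in_all => c /xy e; rewrite /sat.
by case: c.1; [rewrite /= -sgr_ge0 e sgr_ge0|rewrite /= -sgr_gt0 e sgr_gt0].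
Qed.

Definition fm_bound {n} (c : constraint (1 + n)) (z : 'rV[R]_n) : R :=
  - evalQ (rsubmx c.2) z / ratr (coef0 c).

Section Step.
Variable n : nat.
Implicit Types (c p q : constraint (1 + n)) (x : 'rV[R]_(1 + n)) (z : 'rV[R]_n).

Lemma sat_split c x : sat c x =
  (0 < ratr (coef0 c) * lsubmx x 0 0 + evalQ (rsubmx c.2) (rsubmx x) ?<= if c.1).
Proof. by rewrite /sat evalQ_split evalQ1. Qed.

Lemma sat_coef0_eq0 c x : coef0 c = 0 -> sat c x = sat (c.1, rsubmx c.2) (rsubmx x).
Proof. by move=> c0; rewrite sat_split c0 rmorph0 mul0r add0r. Qed.

Lemma sat_coef0_gt0 c x : 0 < coef0 c ->
  sat c x = (fm_bound c (rsubmx x) < lsubmx x 0 0 ?<= if c.1).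
Proof. by move=> c0; rewrite sat_split lteif_affine_pos // ltr0q. Qed.

Lemma sat_coef0_lt0 c x : coef0 c < 0 ->
  sat c x = (lsubmx x 0 0 < fm_bound c (rsubmx x) ?<= if c.1).
Proof. by move=> c0; rewrite sat_split lteif_affine_neg // ltrq0. Qed.

Lemma sat_fm_pair p q z : 0 < coef0 p -> coef0 q < 0 ->
  sat (p.1 && q.1, (- coef0 q) *: rsubmx p.2 + coef0 p *: rsubmx q.2) z =
  (fm_bound p z < fm_bound q z ?<= if p.1 && q.1).
Proof.
rewrite -(ltr0q R) -(ltrq0 R) => p0 q0.
rewrite /sat /fm_bound evalQD !evalQZ rmorphN /=.
set ap := ratr (coef0 p); set aq := ratr (coef0 q).
set rp := evalQ _ z; set rq := evalQ _ z.
rewrite (_ : - aq * rp + ap * rq = ap * (aq * (- rp / ap) + rq)).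
  by rewrite -[X in X < _ ?<= if _](mulr0 ap) lteif_pM2l // lteif_affine_neg.
by field; rewrite gt_eqF.
Qed.

Lemma fm_step_sound S x : sat_all S x -> sat_all (fm_step S) (rsubmx x).
Proof.
move=> /allP Sx; apply/allP => c; rewrite mem_cat.
case/orP=> [/mapP[d + ->]|/allpairsP[[p q] /= []]].
  by rewrite mem_filter => /andP[/eqP d0 dS]; rewrite -sat_coef0_eq0 // Sx.
rewrite !mem_filter => /andP[p0 pS] /andP[q0 qS] ->.
rewrite sat_fm_pair //; apply: (@lteif_trans _ _ _ (lsubmx x 0 0)).
  by rewrite -sat_coef0_gt0 // Sx.
by rewrite -sat_coef0_lt0 // Sx.
Qed.

Lemma fm_step_complete S z :
  sat_all (fm_step S) z -> exists y : R, sat_all S (row_mx (const_mx y) z).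
Proof.
move=> /allP Sz; have [|y [yl yu]] := exists_between
    [seq (c.1, fm_bound c z) | c <- S & 0 < coef0 c]
    [seq (c.1, fm_bound c z) | c <- S & coef0 c < 0].
  move=> _ _ /mapP[p + ->] /mapP[q + ->].
  rewrite !mem_filter => /andP[p0 pS] /andP[q0 qS].
  rewrite -sat_fm_pair //; apply: Sz; rewrite mem_cat; apply/orP; right.
  by apply/allpairsP; exists (p, q); rewrite !mem_filter p0 q0 pS qS.
exists y; apply/allP => c cS; set x := row_mx _ z.
have [xz xy] : rsubmx x = z /\ lsubmx x 0 0 = y by rewrite row_mxKr row_mxKl mxE.
case: (ltgtP (coef0 c) 0) => c0.
- rewrite sat_coef0_lt0 // xz xy; apply: (yu (c.1, _)).
  by apply/mapP; exists c; rewrite ?mem_filter ?c0.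
- rewrite sat_coef0_gt0 // xz xy; apply: (yl (c.1, _)).
  by apply/mapP; exists c; rewrite ?mem_filter ?c0.
- by rewrite sat_coef0_eq0 // xz Sz // mem_cat map_f // mem_filter c0 eqxx.
Qed.

Lemma fm_stepP S z :
  (exists x, rsubmx x = z /\ sat_all S x) <-> sat_all (fm_step S) z.
Proof.
split=> [[x [<- /fm_step_sound //]]|/fm_step_complete[y Sy]].
by exists (row_mx (const_mx y) z); rewrite row_mxKr.
Qed.

End Step.

Lemma fm_elimP m n (S : seq (constraint (m + n))) (z : 'rV[R]_n) :
  (exists x, rsubmx x = z /\ sat_all S x) <-> sat_all (fm_elim m S) z.
Proof.
elim: m S => [|m IH] S /=.
  by split=> [[x [<-]]|Sz]; [rewrite rsubmx0|exists z; rewrite rsubmx0].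
rewrite -IH; split=> [[x [<- Sx]]|[w [<- /fm_stepP[x [<- Sx]]]]]; last first.
  by exists x; rewrite rsubmxS.
exists (rsubmx (x : 'rV[R]_(1 + (m + n)))); rewrite rsubmxS; split=> //.
by apply/fm_stepP; exists x.
Qed.

End FourierMotzkin.

Section Inclusion.
Context {R : realType} {n m kA kB : nat}.
Variables (phiA : 'I_kA -> 'rV[rat]_m) (chiA : 'I_kA -> 'rV[rat]_n).
Variables (phiB : 'I_kB -> 'rV[rat]_m) (chiB : 'I_kB -> 'rV[rat]_n).

Definition violation_system (j : 'I_kB) : seq (constraint (m + n)) :=
  (false, - row_mx (phiB j) (chiB j)) ::
  [seq (true, row_mx (phiA i) (chiA i)) | i <- enum 'I_kA].

Lemma violation_systemP j (lam : 'rV[R]_m) (v : 'rV[R]_n) :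
  sat_all (violation_system j) (row_mx lam v) <->
  polyhedronP phiA chiA v lam /\ evalQ (phiB j) lam < - evalQ (chiB j) v.
Proof.
rewrite /sat_all /= all_map /sat /= evalQN evalQ_row_mx oppr_gt0 -ltrBrDr sub0r.
rewrite andbC; split=> [/andP[/allP PA ->]|[PA ->]].
  by split=> // i; have /= := PA i (mem_enum _ i); rewrite evalQ_row_mx -lerBlDr sub0r.
by rewrite andbT; apply/allP => i _ /=; rewrite evalQ_row_mx -lerBlDr sub0r PA.
Qed.

Definition subset_systems : seq (seq (constraint n)) :=
  [seq fm_elim m (violation_system j) | j <- enum 'I_kB].

Lemma polyhedronP_subsetE (v : 'rV[R]_n) :
  polyhedronP phiA chiA v `<=` polyhedronP phiB chiB v <->
  all (fun E => ~~ sat_all E v) subset_systems.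
Proof.
rewrite all_map; split=> [PAB|/allP noviol lam PAlam j].
  apply/allP => j _ /=; apply/negP => /fm_elimP[x [xv]].
  by rewrite -[x]hsubmxK xv => /violation_systemP[/PAB/(_ j)]; lra.
rewrite leNgt; apply/negP => viol; have /negP := noviol j (mem_enum _ j); apply.
apply/fm_elimP; exists (row_mx lam v); rewrite row_mxKr; split=> //.
exact/violation_systemP.
Qed.

End Inclusion.

Section Density.
Context {R : realType}.

Lemma continuous_evalQ {n} (a : 'rV[rat]_n) : continuous (evalQ (R:=R) a).
Proof.
apply: continuous_big => [|i _]; first exact: add_continuous.
by move=> x; apply: (@cvgM _ _ (nbhs x)); [exact: cvg_cst|exact: coord_continuous].
Qed.

Lemma near_sg_evalQ {n} (a : 'rV[rat]_n) (v : 'rV[R]_n) :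
  \forall x \near v, evalQ a v != 0 -> Num.sg (evalQ a x) = Num.sg (evalQ a v).
Proof.
case: (ltrgtP (evalQ a v) 0) => [neg|pos|_].
- by apply: filterS (cvgr_lt _ (continuous_evalQ a v) _ neg) => x ? _; rewrite !ltr0_sg.
- by apply: filterS (cvgr_gt _ (continuous_evalQ a v) _ pos) => x ? _; rewrite !gtr0_sg.
- by apply: (@nearW _ (nbhs v)).
Qed.

Lemma rV_nbhs_ball {n} (v : 'rV[R]_n) (U : set 'rV[R]_n) : nbhs v U ->
  exists2 e : R, 0 < e &
    forall x : 'rV[R]_n, (forall j, `|v 0 j - x 0 j| < e) -> U x.
Proof.
move=> /nbhs_ballP[e e0 ball_U]; exists e => // x vx; apply: ball_U.
by split=> // i j; rewrite (ord1 i); apply: vx.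
Qed.

Lemma rat_row_dense {n} (w : 'rV[R]_n) (U : set 'rV[R]_n) : nbhs w U ->
  exists w' : 'rV[rat]_n, U (map_mx ratr w').
Proof.
move=> /rV_nbhs_ball[e e0 ball_U].
have /choice[q wq] : forall j : 'I_n, exists q : rat, `|w 0 j - ratr q| < e.
  move=> j; have [|q] := @rat_in_itvoo R (w 0 j - e) (w 0 j + e); first lra.
  rewrite in_itv /= => /andP[? ?]; exists q.
  by rewrite ltr_distlC; apply/andP; split; lra.
by exists (\row_j q j); apply: ball_U => j; rewrite !mxE.
Qed.

Lemma rat_dense_kermx {n p} {M : 'M[rat]_(n, p)} {v : 'rV[R]_n} {U : set 'rV[R]_n} :
  v *m map_mx ratr M = 0 -> nbhs v U ->
  exists x : 'rV[rat]_n, x *m M = 0 /\ U (map_mx ratr x).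
Proof.
move=> vM /rV_nbhs_ball[e e0 ball_U].
have /submxP[w vw] : (v <= map_mx ratr (kermx M))%MS.
  by rewrite map_kermx sub_kermx vM.
have /rat_row_dense[w' /ball_U Uw'] : \forall w' \near w,
    forall j, `|v 0 j - (w' *m map_mx ratr (kermx M)) 0 j| < e.
  apply: (@filter_forall _ _ _ (nbhs w) _) => j; rewrite vw evalQ_col.
  under eq_near do rewrite evalQ_col.
  exact: cvgr_dist_lt (continuous_evalQ _ w) _ e0.
exists (w' *m kermx M); split; first by rewrite -mulmxA mulmx_ker mulmx0.
by rewrite map_mxM.
Qed.

Lemma rat_approx_sg {n} (F : seq 'rV[rat]_n) (v : 'rV[R]_n) (U : set 'rV[R]_n) :
  nbhs v U -> exists x : 'rV[rat]_n, U (map_mx ratr x) /\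
    {in F, forall a, Num.sg (evalQ a (map_mx ratr x)) = Num.sg (evalQ a v)}.
Proof.
move=> vU; set A := [seq a <- F | evalQ a v == 0].
pose M := (\matrix_(j < size A) A`_j)^T.
have evalM (x : 'rV[R]_n) j : (x *m map_mx ratr M) 0 j = evalQ A`_j x.
  by rewrite evalQ_col tr_col trmxK rowK.
have vM : v *m map_mx ratr M = 0.
  apply/rowP => j; rewrite evalM mxE.
  by have := mem_nth 0 (ltn_ord j); rewrite mem_filter => /andP[/eqP].
have near_v : \forall x \near v,
    {in F, forall a, evalQ a v != 0 -> Num.sg (evalQ a x) = Num.sg (evalQ a v)}.
  apply: filterS (filter_forall _ (fun a : seq_sub F => near_sg_evalQ (val a) v)).
  by move=> x sg_x a aF; apply: (sg_x (SeqSub aF)).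
have [x [xM [Ux sg_x]]] := rat_dense_kermx vM (filterI vU near_v).
exists x; split=> // a aF; have [a0|] := eqVneq (evalQ a v) 0; last exact: sg_x.
have aA : (index a A < size A)%N by rewrite index_mem mem_filter a0 eqxx.
have := evalM (map_mx ratr x) (Ordinal aA).
by rewrite /= nth_index -?index_mem // -map_mxM xM map_mx0 mxE a0 => <-.
Qed.

End Density.

Theorem lemma8p7 (R : realType) (n m k1 k2 : nat)
  (phi1 : 'I_k1 -> 'rV[rat]_m) (chi1 : 'I_k1 -> 'rV[rat]_n)
  (phi2 : 'I_k2 -> 'rV[rat]_m) (chi2 : 'I_k2 -> 'rV[rat]_n)
  (v : 'rV[R]_n) :
  polyhedronP phi1 chi1 v = polyhedronP phi2 chi2 v ->
  full_dim (polyhedronP phi1 chi1 v) ->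
  forall O : set 'rV[R]_n, nbhs v O ->
  exists v' : 'rV[rat]_n,
    O (map_mx ratr v') /\
    polyhedronP phi1 chi1 (map_mx ratr v' : 'rV[R]_n) =
    polyhedronP phi2 chi2 (map_mx ratr v' : 'rV[R]_n).
Proof.
move=> P12 _ O vO.
set Es := subset_systems phi1 chi1 phi2 chi2 ++ subset_systems phi2 chi2 phi1 chi1.
have [x [Ox sg_x]] := rat_approx_sg [seq c.2 | c <- flatten Es] v O vO.
have sat_x : {in Es, forall E,
    ~~ sat_all E (map_mx ratr x : 'rV[R]_n) = ~~ sat_all E v}.
  move=> E EEs; apply: congr1; apply: sat_all_sg => c cE.
  by apply: sg_x; apply: map_f; apply/flattenP; exists E.
have : all (fun E => ~~ sat_all E v) Es.
  by rewrite all_cat; apply/andP; split; apply/polyhedronP_subsetE; rewrite P12.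
rewrite -(eq_in_all sat_x) all_cat => /andP[/polyhedronP_subsetE P12x].
move=> /polyhedronP_subsetE P21x.
by exists x; split=> //; apply/seteqP.
Qed.
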